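(* Let $n\ge5$, let $\Delta$ be a triangulation of the punctured $n$-gon $\mathcal{P}_n$ with quiver $Q_\Delta$, and let $\alpha\in\Delta$ be a diagonal which is not close to the border and which is not a diagonal between the puncture and the border. Then the quiver obtained from $Q_\Delta$ by factoring out the vertex $v_\alpha$ is disconnected.
   Context: $\mathcal{P}_n$ is a regular $n$-gon with one puncture in its center. For border vertices $a \neq b$, $\delta_{a,b}$ is the counterclockwise border path from $a$ to $b$ and $|\delta_{a,b}|$ the number of border vertices on it (including $a,b$); $\delta_{a,a}$ goes once around. A diagonal is an edge (homotopy class of non-self-crossing interior paths from $a$ to $b$ homotopic to $\delta_{a,b}$, with $|\delta_{a,b}|\ge3$) together with a tag $\epsilon\in\{\pm1\}$, with $\epsilon=1$ forced if $a\ne b$; edges with $a=b$ are drawn as arcs from the puncture to $a$ and called diagonals between the puncture and the border. Two puncture diagonals at $a,c$ with tags $\epsilon,\epsilon'$ cross iff $a\ne c$ and $\epsilon\ne\epsilon'$; otherwise crossing means intersecting in the interior for all representatives. A triangulation is a maximal set of pairwise non-crossing diagonals. A diagonal from $a$ to $b$, $a\ne b$, is close to the border if $|\delta_{a,b}|=3$. The quiver $Q_\Delta$ has a vertex $v_\beta$ for each $\beta\in\Delta$, an arrow between $v_\beta,v_\gamma$ when $\beta,\gamma$ bound a common triangle, oriented $v_\beta\to v_\gamma$ if $\gamma$ is obtained from $\beta$ by anticlockwise rotation about their common vertex (two diagonals from the puncture to the same vertex are treated as loops around the puncture, giving separate triangles), and with oriented $2$-cycles deleted. Factoring out a vertex means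 deleting it and all arrows incident to it. *)

From mathcomp Require Import all_boot.
Set Implicit Arguments. Unset Strict Implicit. Unset Printing Implicit Defensive.

(* Border vertices are 'I_n, numbered counterclockwise.
   A diagonal is either
   - inl (a, b): an edge from a to b, a <> b, in the homotopy class of the
     counterclockwise border path delta_{a,b} (tag forced to be +1), or
   - inr (a, eps): a diagonal between the puncture and the border vertex a
     (edge from a to a), with tag eps (true = +1, false = -1). *)
Definition diag (n : nat) := ('I_n * 'I_n + 'I_n * bool)%type.

Definition cdist n (a b : 'I_n) : nat := (b + n - a) %% n.

(* |delta_{a,b}| = number of border vertices on delta_{a,b}, for a <> b *)
Definition border_len n (a b : 'I_n) : nat := (cdist a b).+1.

Definition valid_diag n (d : diag n) : bool :=
  match d with
  | inl (a, b) => (a != b) && (3 <= border_len a b)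
  | inr _ => true
  end.

Definition is_puncture_diag n (d : diag n) : bool :=
  if d is inr _ then true else false.

Definition close_to_border n (d : diag n) : bool :=
  match d with
  | inl (a, b) => (a != b) && (border_len a b == 3)
  | inr _ => false
  end.

Definition strictly_inside n (a b c : 'I_n) : bool :=
  (0 < cdist a c) && (cdist a c < cdist a b).

(* Otherwise: intersection in the interior for all
   representatives, computed in the universal cover (upper half-plane,
   border = integer line, puncture at infinity): the edge (a,b) lifts to the
   chords [a + m n, a + cdist a b + m n]; a puncture diagonal at c lifts to
   vertical rays at c + m n.  Shifting so that a sits at 0, with
   t = cdist a c, k = cdist a b, l = cdist c d, two chords cross iff
   0 < t < k < t + l  (shift m = 0) or  n < t + l < n + k  (shift m = -1);
   no other shift can give a crossing since t, k, l < n. *)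
Definition cross n (d e : diag n) : bool :=
  match d, e with
  | inr (a, ea), inr (c, ec) => (a != c) && (ea != ec)
  | inl (a, b), inr (c, _) => strictly_inside a b c
  | inr (c, _), inl (a, b) => strictly_inside a b c
  | inl (a, b), inl (c, d) =>
      let t := cdist a c in let k := cdist a b in let l := cdist c d in
      ((0 < t) && (t < k) && (k < t + l)) || ((n < t + l) && (t + l < n + k))
  end.

Definition triangulation n (D : {set diag n}) : Prop :=
  [/\ (forall d, d \in D -> valid_diag d),
      (forall d e, d \in D -> e \in D -> ~~ cross d e)
    & (forall d, valid_diag d -> d \notin D -> exists2 e, e \in D & cross d e)].

(* Position of a diagonal in the counterclockwise order of the sides at the
   border vertex a (from the border edge towards a+1, rank 0, to the border
   edge towards a-1, rank 2n-1): edges (a, a+k) have rank k-1, puncture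
   diagonals at a have rank n-1, edges (a-k, a) have rank n-1+(n-k). *)
Definition rank_at n (a : 'I_n) (d : diag n) : option nat :=
  match d with
  | inl (x, y) =>
      if x == a then Some (cdist x y).-1
      else if y == a then Some (n.-1 + (n - cdist x y))
      else None
  | inr (x, _) => if x == a then Some n.-1 else None
  end.

(* b and c are consecutive sides of D at the border vertex a, c following b
   counterclockwise: they bound a common triangle at the corner a, and c is
   obtained from b by anticlockwise rotation about a.  (Both puncture
   diagonals at a, when present, get the same rank: they are treated as two
   loops around the puncture, each bounding its own triangle with the
   neighbouring sides, and no arrow joins them.) *)
Definition corner_at n (D : {set diag n}) (a : 'I_n) (b c : diag n) : bool :=
  [&& b \in D, c \in D &
   match rank_at a b, rank_at a c with
   | Some r, Some s =>
       (r < s) && [forall e in D,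
                     if rank_at a e is Some t then ~~ ((r < t) && (t < s))
                     else true]
   | _, _ => false
   end].

(* b and c are puncture diagonals of D at distinct vertices, consecutive
   counterclockwise around the puncture: they bound a common triangle at the
   puncture, and c is obtained from b by anticlockwise rotation. *)
Definition corner_at_puncture n (D : {set diag n}) (b c : diag n) : bool :=
  match b, c with
  | inr (x, _), inr (y, _) =>
      [&& b \in D, c \in D, x != y &
       [forall e in D, if e is inr (z, _) then ~~ strictly_inside x y z
                       else true]]
  | _, _ => false
  end.

(* number of arrows v_b -> v_c before deleting oriented 2-cycles
   (one for each common triangle / corner) *)
Definition raw_arrows n (D : {set diag n}) (b c : diag n) : nat :=
  #|[set a : 'I_n | corner_at D a b c]| + corner_at_puncture D b c.

(* Q_Delta: number of arrows v_b -> v_c after deleting oriented 2-cycles *)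
Definition quiver_arrows n (D : {set diag n}) (b c : diag n) : nat :=
  raw_arrows D b c - raw_arrows D c b.

Definition factor_out_adj n (D : {set diag n}) (alpha : diag n) : rel (diag n) :=
  fun b c => [&& b \in D :\ alpha, c \in D :\ alpha &
              (0 < quiver_arrows D b c) || (0 < quiver_arrows D c b)].

Definition factor_out_disconnected n (D : {set diag n}) (alpha : diag n) : Prop :=
  exists b c, [/\ b \in D :\ alpha, c \in D :\ alpha &
                  ~~ connect (factor_out_adj D alpha) b c].

From mathcomp Require Import all_boot zify.
Set Implicit Arguments. Unset Strict Implicit. Unset Printing Implicit Defensive.

(* Cutting P_n along alpha = (a, b) leaves an unpunctured polygon, bounded by
   alpha and the border path from a to b, and a punctured one.  Every other
   diagonal of the triangulation lies on one side, and both sides contain one: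
   since alpha is not close to the border, the diagonal (a, a+2) or one
   crossing it lies on the unpunctured side, and the puncture diagonal at a or
   one crossing it lies on the other.  Two diagonals on opposite sides never
   bound a common triangle: at a shared border vertex, alpha sits strictly
   between them in the counterclockwise order, and they cannot meet at the
   puncture. *)

Section CyclicDistance.
Variable n : nat.
Implicit Types a x y : 'I_n.

Lemma cdist_spec x y :
  [/\ x < n, y < n, cdist x y < n & x + cdist x y = y \/ x + cdist x y = y + n].
Proof.
have [hx hy] := (ltn_ord x, ltn_ord y); rewrite /cdist; split=> //.
  by rewrite ltn_mod; lia.
case: (leqP x y) => xy.
  by rewrite -addnBAC // modnDr modn_small; lia.
by rewrite modn_small; lia.
Qed.

Lemma cdistxx x : cdist x x = 0.
Proof. by rewrite /cdist addKn modnn. Qed.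

Lemma cdist_inj a : injective (cdist a).
Proof.
move=> u w E; apply: ord_inj.
have [_ ? _ hu] := cdist_spec a u; have [_ ? _ hw] := cdist_spec a w; lia.
Qed.

Lemma cdist_eq0 x y : (cdist x y == 0) = (x == y).
Proof.
apply/eqP/eqP => [|->]; last exact: cdistxx.
by rewrite -(cdistxx x) => /cdist_inj.
Qed.

Lemma cdist_surj a k : k < n -> exists w, cdist a w = k.
Proof.
move=> kn; have an := ltn_ord a.
have wn : (a + k) %% n < n by rewrite ltn_mod; lia.
pose w := Ordinal wn; have wE : nat_of_ord w = (a + k) %% n by [].
clearbody w; exists w; have [_ _ ?] := cdist_spec a w.
case: (ltnP (a + k) n) => h; last rewrite -(subnK h) modnDr in wE.
all: rewrite modn_small in wE; lia.
Qed.

End CyclicDistance.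

(* The diagonals of the unpunctured side of alpha = (a, b) are the edges with
   an endpoint strictly inside the border path from a to b. *)
Definition disk_side n (a b : 'I_n) (e : diag n) : bool :=
  if e is inl (x, y) then strictly_inside a b x || strictly_inside a b y else false.

Lemma disk_side_span n (a b x y : 'I_n) :
  x != y -> ~~ cross (inl (a, b)) (inl (x, y)) -> disk_side a b (inl (x, y)) ->
  [/\ cdist a x < cdist a y, cdist a y <= cdist a b & cdist x y = cdist a y - cdist a x].
Proof.
rewrite /cross /disk_side /strictly_inside -val_eqE /= => xy.
have [? ? ? ?] := cdist_spec a x; have [? ? ? ?] := cdist_spec a y.
have [? ? ? ?] := cdist_spec x y; have [? ? ? ?] := cdist_spec a b.
split; lia.
Qed.

Section Separation.
Variables (n : nat) (a b : 'I_n).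
Hypothesis ab : a != b.
Local Notation alpha := (inl (a, b) : diag n).
Local Notation k := (cdist a b).

Lemma rank_at_disk_side e v r :
  valid_diag e -> ~~ cross alpha e -> disk_side a b e -> e != alpha ->
  rank_at v e = Some r -> ~~ strictly_inside a b v ->
  (v = a /\ r < k.-1) \/ (v = b /\ n.-1 + (n - k) < r).
Proof.
case: e => [[x y]|//] /andP[xy _] ce de ne.
have [ay yk xyE] := disk_side_span xy ce de.
have [_ _ kn _] := cdist_spec a b.
rewrite /rank_at /strictly_inside.
case: eqP => [<-|_]; [|case: eqP => [<-|//]]; case=> <- nv.
- have xa : x = a by apply: (@cdist_inj _ a); rewrite cdistxx; lia.
  subst x; left; split => //.
  have : cdist a y != k by apply: contra ne => /eqP/cdist_inj ->.
  lia.
- have yb : y = b by apply: (@cdist_inj _ a); lia.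
  subst y; right; split => //.
  have : cdist a x != 0 by apply: contra ne; rewrite -(cdistxx a) => /eqP/cdist_inj ->.
  lia.
Qed.

Lemma rank_at_far_side f v s :
  valid_diag f -> ~~ cross alpha f -> ~~ disk_side a b f -> f != alpha ->
  rank_at v f = Some s ->
  [/\ ~~ strictly_inside a b v, v = a -> k.-1 < s & v = b -> s < n.-1 + (n - k)].
Proof.
have [? ? kn ?] := cdist_spec a b; have k_gt0 : 0 < k by rewrite lt0n cdist_eq0.
case: f => [[x y]|[c eps]] /=; last first.
  by move=> _ ce _ _; case: eqP => // <- [<-]; split => // _; lia.
move=> /andP[xy _] _; rewrite negb_or => /andP[nx ny] ne.
have [? ? ? ?] := cdist_spec x y; have [? ? ? ?] := cdist_spec a x.
have [? ? ? ?] := cdist_spec a y.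
rewrite /rank_at; case: eqP => [<-|_]; [|case: eqP => [<-|//]]; case=> <-.
all: split=> // E; subst.
- have : y != b by apply: contra ne => /eqP ->.
  move: xy ny; rewrite /strictly_inside -!val_eqE /=; lia.
- lia.
- lia.
- have : x != a by apply: contra ne => /eqP ->.
  move: xy nx; rewrite /strictly_inside -!val_eqE /=; lia.
Qed.

Lemma rank_at_alpha_src : rank_at a alpha = Some k.-1.
Proof. by rewrite /rank_at eqxx. Qed.

Lemma rank_at_alpha_tgt : rank_at b alpha = Some (n.-1 + (n - k)).
Proof. by rewrite /rank_at (negbTE ab) eqxx. Qed.

Lemma rank_at_separates e f v r s :
  valid_diag e -> valid_diag f -> ~~ cross alpha e -> ~~ cross alpha f ->
  e != alpha -> f != alpha -> disk_side a b e != disk_side a b f ->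
  rank_at v e = Some r -> rank_at v f = Some s ->
  exists2 t, rank_at v alpha = Some t & (r < t < s) || (s < t < r).
Proof.
wlog de : e f r s / disk_side a b e.
  move=> IH; case/orP: (orbN (disk_side a b e)) => [de|nde]; first exact: IH.
  move=> ve vf ce cf ne nf; rewrite (negbTE nde) /= negbK => df re rf.
  have [|t ? between] := IH f e s r df vf ve cf ce nf ne _ rf re.
    by rewrite df (negbTE nde).
  by exists t; rewrite // orbC.
move=> ve vf ce cf ne nf; rewrite de => /= df re rf.
have [nv va vb] := rank_at_far_side vf cf df nf rf.
have [[E lt]|[E lt]] := rank_at_disk_side ve ce de ne re nv; subst v.
- exists k.-1; first exact: rank_at_alpha_src.
  by have := va erefl; lia.
- exists (n.-1 + (n - k)); first exact: rank_at_alpha_tgt.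
  by have := vb erefl; lia.
Qed.

End Separation.

Lemma eq_inl_diag n (x y a b : 'I_n) :
  (inl (x, y) == inl (a, b) :> diag n) = (x == a) && (y == b).
Proof. by []. Qed.

Lemma corner_at_blocked n (D : {set diag n}) v e f g r s t :
  g \in D -> rank_at v e = Some r -> rank_at v f = Some s ->
  rank_at v g = Some t -> (r < t < s) || (s < t < r) -> ~~ corner_at D v e f.
Proof.
move=> gD re rf rg; rewrite /corner_at re rf => /orP[] /andP[rt ts].
  by apply/and3P => -[_ _ /andP[_ /forall_inP/(_ _ gD)]]; rewrite rg rt ts.
by apply/and3P => -[_ _ /andP[rs _]]; lia.
Qed.

Section Triangulated.
Variables (n : nat) (D : {set diag n}) (a b : 'I_n).
Hypotheses (TD : triangulation D) (alphaD : inl (a, b) \in D).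
Local Notation alpha := (inl (a, b) : diag n).

Lemma raw_arrows_across e f :
  e \in D :\ alpha -> f \in D :\ alpha ->
  disk_side a b e != disk_side a b f -> raw_arrows D e f = 0.
Proof.
have [Dvalid Dnc _] := TD; have /andP[ab _] := Dvalid _ alphaD.
rewrite !inE => /andP[ne eD] /andP[nf fD] sep.
have no_corner v : ~~ corner_at D v e f.
  case re: (rank_at v e) => [r|]; last by rewrite /corner_at re !andbF.
  case rf: (rank_at v f) => [s|]; last by rewrite /corner_at re rf !andbF.
  have [t rt between] := rank_at_separates ab (Dvalid _ eD) (Dvalid _ fD)
    (Dnc _ _ alphaD eD) (Dnc _ _ alphaD fD) ne nf sep re rf.
  exact: corner_at_blocked alphaD re rf rt between.
have no_puncture_corner : corner_at_puncture D e f = false.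
  by move: sep; case: e f {ne nf eD fD no_corner} => [[? ?]|[? ?]] [[? ?]|[? ?]].
rewrite /raw_arrows no_puncture_corner addn0; apply/eqP; rewrite cards_eq0.
by apply/eqP/setP => v; rewrite !inE (negbTE (no_corner v)).
Qed.

Lemma disk_side_closed : closed (factor_out_adj D alpha) (disk_side a b).
Proof.
move=> e f /and3P[eD fD arrows]; apply/eqP; apply: contraTT arrows => sep.
by rewrite /quiver_arrows !raw_arrows_across // eq_sym.
Qed.

Lemma in_or_crossed d : valid_diag d -> exists2 g, g \in D & g = d \/ cross d g.
Proof.
have [_ _ Dmax] := TD => vd.
have [dD|dnD] := boolP (d \in D); first by exists d; [|left].
by have [g gD cg] := Dmax d vd dnD; exists g; [|right].
Qed.

Lemma exists_disk_side : 3 <= cdist a b -> exists2 g, g \in D :\ alpha & disk_side a b g.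
Proof.
move=> long_alpha; have [_ Dnc _] := TD; have [? ? kn ?] := cdist_spec a b.
have [w aw] : exists w, cdist a w = 2 by apply: cdist_surj; lia.
have vaw : valid_diag (inl (a, w) : diag n).
  rewrite /= /border_len aw andbT; apply/eqP => E.
  by move: aw; rewrite -E cdistxx.
have [g gD gaw] := in_or_crossed vaw.
suff /andP[ng dg] : (g != alpha) && disk_side a b g.
  by exists g; rewrite // !inE ng.
have := Dnc _ _ alphaD gD; have [? ? ? ?] := cdist_spec a w.
case: g {gD} gaw => [[x y] [[-> ->]|]|[c eps] [//|]] /=; rewrite /strictly_inside.
all: rewrite ?eq_inl_diag -?val_eqE /= ?cdistxx; try lia.
have [? ? ? ?] := cdist_spec a x; have [? ? ? ?] := cdist_spec x y.
have [? ? ? ?] := cdist_spec a y; lia.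
Qed.

Lemma exists_far_side : exists2 g, g \in D :\ alpha & ~~ disk_side a b g.
Proof.
have [_ Dnc _] := TD.
have [g gD ga] := in_or_crossed (isT : valid_diag (inr (a, true) : diag n)).
suff /andP[ng dg] : (g != alpha) && ~~ disk_side a b g.
  by exists g; rewrite // !inE ng.
have := Dnc _ _ alphaD gD.
case: g {gD} ga => [[x y] [//|]|//] /=; rewrite /strictly_inside.
rewrite eq_inl_diag -!val_eqE /=.
have [? ? ? ?] := cdist_spec a x; have [? ? ? ?] := cdist_spec x y.
have [? ? ? ?] := cdist_spec a y; have [? ? ? ?] := cdist_spec a b.
have [? ? ? ?] := cdist_spec x a; lia.
Qed.

End Triangulated.

Theorem lemma5p4 (n : nat) (D : {set diag n}) (alpha : diag n) :
  5 <= n -> triangulation D -> alpha \in D ->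
  ~~ close_to_border alpha -> ~~ is_puncture_diag alpha ->
  factor_out_disconnected D alpha.
Proof.
move=> _ TD + + /negP; case: alpha => [[a b] alphaD not_close _|[? ?] _ _ []] //.
have long_alpha : 3 <= cdist a b.
  have [Dvalid _ _] := TD; have /andP[ab long] := Dvalid _ alphaD.
  by move: not_close long; rewrite /= ab /border_len; lia.
have [g1 g1D disk1] := exists_disk_side TD alphaD long_alpha.
have [g2 g2D far2] := exists_far_side TD alphaD.
exists g1, g2; split => //.
apply/negP => /(closed_connect (disk_side_closed TD alphaD)).
by rewrite -!topredE /= disk1 (negbTE far2).
Qed.
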